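(* Let $\pi:P\to M$ be a principal fibre bundle with group $G=P^{-1}P$, in the setting described in the context, and let $\nabla$ be a connection in the groupoid $PP^{-1}$ with connection form $\omega$. Let $R=R_\nabla$ be its curvature and $\hat R$ the $G$-valued 2-form on $P$ corresponding to $R$. Then $\hat R=d\omega$ as $G$-valued 2-forms on $P$, i.e. for every infinitesimal 2-simplex $(x,y,z)$ in $P$, $$R(\pi x,\pi y,\pi z)\cdot x = x\cdot\omega(x,y)\omega(y,z)\omega(z,x).$$ In particular, $d\omega$ is horizontal and equivariant.
   Context: Setting: $\Phi$ is a groupoid whose object set contains a set $M$ and an object $*\notin M$; $P$ is the set of arrows of $\Phi$ with domain $*$ and codomain in $M$; $\pi:P\to M$ the codomain map; $G=P^{-1}P:=\Phi( *,* )$ acts on $P$ from the right by precomposition, freely and transitively on fibres; $x^{-1}z\in G$ for $x,z$ in one fibre is computed in $\Phi$. $PP^{-1}$ is the full subgroupoid of $\Phi$ on $M$, acting on $P$ from the left by postcomposition; composition is right to left. $M$ and $P$ carry reflexive symmetric neighbour relations $\sim$; an infinitesimal $k$-simplex is a $(k+1)$-tuple of mutual neighbours; $\pi$ preserves $\sim$; every infinitesimal $k$-simplex in $M$ lifts to one in $P$ starting at any prescribed point over its first vertex; the right action of each $g\in G$ preserves $\sim$. A connection in $PP^{-1}$ assigns to each $a\sim b$ in $M$ an arrow $\nabla(a,b):b\to a$ of $PP^{-1}$, with $\nabla(a,a)=\mathrm{id}$, $\nabla(b,a)=\nabla(a,b)^{-1}$. Its connection form is $\omega(u,v):=u^{-1}(\nabla(\pi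 u,\pi v)\cdot v)\in G$ for $u\sim v$. Its curvature is the 2-form $R(a_0,a_1,a_2)=\nabla(a_0,a_1)\nabla(a_1,a_2)\nabla(a_2,a_0)\in PP^{-1}(a_0,a_0)$ on infinitesimal 2-simplices of $M$ (a 2-form with values in the gauge group bundle, whose fibre over $a$ is $PP^{-1}(a,a)$). For a gauge-valued 2-form $\alpha$ on $M$, $\hat\alpha$ is the $G$-valued 2-form on $P$ with $\hat\alpha(u_0,u_1,u_2)=u_0^{-1}(\alpha(\pi u_0,\pi u_1,\pi u_2)\cdot u_0)$. For a $G$-valued 1-form $\omega$, $d\omega(x_0,x_1,x_2)=\omega(x_0,x_1)\omega(x_1,x_2)\omega(x_2,x_0)$. A $G$-valued $k$-form $\theta$ on $P$ is horizontal if $\theta(u_0,u_1,\dots,u_k)=\theta(u_0,u_1g_1,\dots,u_kg_k)$ whenever $(u_0,u_1g_1,\dots,u_kg_k)$ is still an infinitesimal simplex, and equivariant if $\theta(u_0g,\dots,u_kg)=g^{-1}\theta(u_0,\dots,u_k)g$ for all $g\in G$. *)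

From Stdlib Require Import Arith.

Set Implicit Arguments.

(* A groupoid: objects, hom-types, identities, composition (right to left:
   gcomp g f = "g f" = first f then g), inverses, with the groupoid laws. *)
Record groupoid := Groupoid {
  Ob : Type;
  Hom : Ob -> Ob -> Type;
  gid : forall a, Hom a a;
  gcomp : forall a b c, Hom b c -> Hom a b -> Hom a c;
  ginv : forall a b, Hom a b -> Hom b a;
  gassoc : forall a b c d (h : Hom c d) (g : Hom b c) (f : Hom a b),
      gcomp h (gcomp g f) = gcomp (gcomp h g) f;
  gid_l : forall a b (f : Hom a b), gcomp (gid b) f = f;
  gid_r : forall a b (f : Hom a b), gcomp f (gid a) = f;
  ginv_l : forall a b (f : Hom a b), gcomp (ginv f) f = gid a;
  ginv_r : forall a b (f : Hom a b), gcomp f (ginv f) = gid b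
}.

Arguments gid {g0} a : rename.
Arguments gcomp {g0 a b c} _ _ : rename.
Arguments ginv {g0 a b} _ : rename.

Section Bundle.
Variable Phi : groupoid.
Variable M : Type.
Variable iota : M -> Ob Phi.
Variable star : Ob Phi.

Definition Pb := { m : M & Hom Phi star (iota m) }.
Definition Gr := Hom Phi star star.
Definition piP (u : Pb) : M := projT1 u.
Definition arr (u : Pb) : Hom Phi star (iota (piP u)) := projT2 u.
Definition actR (u : Pb) (g : Gr) : Pb := existT _ (projT1 u) (gcomp (projT2 u) g).

Variable nbM : M -> M -> Prop.
Variable nbP : Pb -> Pb -> Prop.

Definition simplexM (k : nat) (a : nat -> M) : Prop :=
  forall i j, i <= k -> j <= k -> nbM (a i) (a j).
Definition simplexP (k : nat) (u : nat -> Pb) : Prop :=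
  forall i j, i <= k -> j <= k -> nbP (u i) (u j).

Definition simplex2M (a0 a1 a2 : M) : Prop :=
  nbM a0 a1 /\ nbM a1 a2 /\ nbM a2 a0.
Definition simplex2P (u0 u1 u2 : Pb) : Prop :=
  nbP u0 u1 /\ nbP u1 u2 /\ nbP u2 u0.

Definition bundle_axioms : Prop :=
  (forall a, nbM a a) /\ (forall a b, nbM a b -> nbM b a) /\
  (forall u, nbP u u) /\ (forall u v, nbP u v -> nbP v u) /\
  (forall u v, nbP u v -> nbM (piP u) (piP v)) /\
  (forall (k : nat) (a : nat -> M), simplexM k a ->
     forall u0 : Pb, piP u0 = a 0 ->
     exists u : nat -> Pb, simplexP k u /\ u 0 = u0 /\
        forall i, i <= k -> piP (u i) = a i) /\
  (forall (g : Gr) u v, nbP u v -> nbP (actR u g) (actR v g)).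

Definition preconnection := forall a b : M, nbM a b -> Hom Phi (iota b) (iota a).

Definition is_connection (nabla : preconnection) : Prop :=
  (forall a (h : nbM a a), nabla a a h = gid (iota a)) /\
  (forall a b (h : nbM a b) (h' : nbM b a), nabla b a h' = ginv (nabla a b h)).

Variable pi_nb : forall u v, nbP u v -> nbM (piP u) (piP v).

Definition conn_form (nabla : preconnection) (u v : Pb) (h : nbP u v) : Gr :=
  gcomp (ginv (arr u)) (gcomp (nabla (piP u) (piP v) (pi_nb h)) (arr v)).

Definition curvature (nabla : preconnection) (a0 a1 a2 : M)
    (s : simplex2M a0 a1 a2) : Hom Phi (iota a0) (iota a0) :=
  gcomp (nabla a0 a1 (proj1 s))
    (gcomp (nabla a1 a2 (proj1 (proj2 s))) (nabla a2 a0 (proj2 (proj2 s)))).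

Definition form2P := forall u0 u1 u2 : Pb, simplex2P u0 u1 u2 -> Gr.

Definition pi_simplex2 (u0 u1 u2 : Pb) (s : simplex2P u0 u1 u2) :
    simplex2M (piP u0) (piP u1) (piP u2) :=
  conj (pi_nb (proj1 s)) (conj (pi_nb (proj1 (proj2 s))) (pi_nb (proj2 (proj2 s)))).

Definition gauge_form2M :=
  forall a0 a1 a2 : M, simplex2M a0 a1 a2 -> Hom Phi (iota a0) (iota a0).

Definition hat (alpha : gauge_form2M) : form2P :=
  fun u0 u1 u2 s =>
    gcomp (ginv (arr u0)) (gcomp (alpha _ _ _ (pi_simplex2 s)) (arr u0)).

Definition dform1 (omega : forall u v : Pb, nbP u v -> Gr) : form2P :=
  fun u0 u1 u2 s =>
    gcomp (omega u0 u1 (proj1 s))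
      (gcomp (omega u1 u2 (proj1 (proj2 s))) (omega u2 u0 (proj2 (proj2 s)))).

Definition horizontal2 (theta : form2P) : Prop :=
  forall (u0 u1 u2 : Pb) (g1 g2 : Gr) (s : simplex2P u0 u1 u2)
         (s' : simplex2P u0 (actR u1 g1) (actR u2 g2)),
    theta u0 u1 u2 s = theta u0 (actR u1 g1) (actR u2 g2) s'.

Definition equivariant2 (theta : form2P) : Prop :=
  forall (u0 u1 u2 : Pb) (g : Gr) (s : simplex2P u0 u1 u2)
         (s' : simplex2P (actR u0 g) (actR u1 g) (actR u2 g)),
    theta (actR u0 g) (actR u1 g) (actR u2 g) s' =
    gcomp (ginv g) (gcomp (theta u0 u1 u2 s) g).

End Bundle.

(* Both identities are telescoping: in
   u0^-1 nabla(a0,a1) u1 . u1^-1 nabla(a1,a2) u2 . u2^-1 nabla(a2,a0) u0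
   the inner factors u_i u_i^-1 cancel, leaving the conjugate of the curvature
   by u0, i.e. its hat.  No connection axiom is needed for this.  Every hat
   form is horizontal, because it only sees the base points of u1 and u2,
   and equivariant, because replacing u0 by u0 g conjugates by g. *)
From Stdlib Require Import ProofIrrelevance.

Section GroupoidLemmas.
Variable G : groupoid.

Lemma gcompKV {a b c} (f : Hom G a b) (k : Hom G c b) :
  gcomp f (gcomp (ginv f) k) = k.
Proof. rewrite gassoc, ginv_r, gid_l. reflexivity. Qed.

Lemma gcompK {a b c} (f : Hom G a b) (k : Hom G c a) :
  gcomp (ginv f) (gcomp f k) = k.
Proof. rewrite gassoc, ginv_l, gid_l. reflexivity. Qed.

Lemma ginv_gcomp {a b c} (f : Hom G a b) (g : Hom G b c) :
  ginv (gcomp g f) = gcomp (ginv f) (ginv g).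
Proof.
  rewrite <- (gcompK (gcomp g f) (gcomp (ginv f) (ginv g))).
  rewrite <- gassoc, gcompKV, ginv_r, gid_r.
  reflexivity.
Qed.

End GroupoidLemmas.

Section HatForms.
Variables (Phi : groupoid) (M : Type) (iota : M -> Ob Phi) (star : Ob Phi).
Variables (nbM : M -> M -> Prop) (nbP : Pb Phi iota star -> Pb Phi iota star -> Prop).
Variable pi_nb : forall u v, nbP u v -> nbM (piP u) (piP v).

Lemma hat_conj (alpha : gauge_form2M Phi iota nbM) x y z (s : simplex2P nbP x y z) :
  gcomp (alpha _ _ _ (pi_simplex2 nbM pi_nb s)) (arr x) =
  gcomp (arr x) (hat pi_nb alpha s).
Proof. unfold hat. rewrite gcompKV. reflexivity. Qed.

Lemma hat_horizontal (alpha : gauge_form2M Phi iota nbM) :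
  horizontal2 (hat pi_nb alpha).
Proof.
  intros u0 u1 u2 g1 g2 s s'. unfold hat.
  rewrite (proof_irrelevance _ (pi_simplex2 nbM pi_nb s') (pi_simplex2 nbM pi_nb s)).
  reflexivity.
Qed.

Lemma hat_equivariant (alpha : gauge_form2M Phi iota nbM) :
  equivariant2 (hat pi_nb alpha).
Proof.
  intros u0 u1 u2 g s s'. unfold hat.
  rewrite (proof_irrelevance _ (pi_simplex2 nbM pi_nb s') (pi_simplex2 nbM pi_nb s)).
  unfold arr, actR; simpl.
  rewrite ginv_gcomp, <- !gassoc.
  reflexivity.
Qed.

Lemma hat_curvature (nabla : preconnection Phi iota nbM) x y z (s : simplex2P nbP x y z) :
  hat pi_nb (curvature nabla) s = dform1 (conn_form nbP pi_nb nabla) s.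
Proof.
  unfold hat, dform1, conn_form, curvature.
  rewrite <- !gassoc, !gcompKV.
  (* [proj1] and [proj2] are opaque, so the neighbour proofs agree only up to irrelevance. *)
  repeat f_equal; apply proof_irrelevance.
Qed.

End HatForms.

Theorem theorem1
  (Phi : groupoid) (M : Type) (iota : M -> Ob Phi) (star : Ob Phi)
  (iota_inj : forall m m' : M, iota m = iota m' -> m = m')
  (star_notin : forall m : M, iota m <> star)
  (nbM : M -> M -> Prop) (nbP : Pb Phi iota star -> Pb Phi iota star -> Prop)
  (Hax : bundle_axioms nbM nbP)
  (pi_nb : forall u v, nbP u v -> nbM (piP u) (piP v))
  (nabla : preconnection Phi iota nbM) (Hnabla : is_connection nabla) :
  let omega := conn_form nbP pi_nb nabla in
  let R := curvature nabla in
  (* hat R = d omega as G-valued 2-forms on P *)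
  (forall (x y z : Pb Phi iota star) (s : simplex2P nbP x y z),
     hat pi_nb R s = dform1 omega s) /\
  (* i.e. R(pi x, pi y, pi z) . x = x . omega(x,y) omega(y,z) omega(z,x) *)
  (forall (x y z : Pb Phi iota star) (s : simplex2P nbP x y z),
     gcomp (R _ _ _ (pi_simplex2 nbM pi_nb s)) (arr x) =
     gcomp (arr x) (gcomp (omega x y (proj1 s))
                     (gcomp (omega y z (proj1 (proj2 s)))
                            (omega z x (proj2 (proj2 s)))))) /\
  (* in particular d omega is horizontal and equivariant *)
  horizontal2 (dform1 omega) /\ equivariant2 (dform1 omega).
Proof.
  intros omega R; subst omega R.
  split; [| split; [| split]].
  - apply hat_curvature.
  - intros x y z s.
    rewrite hat_conj, hat_curvature.
    reflexivity.
  - intros u0 u1 u2 g1 g2 s s'.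
    rewrite <- !hat_curvature.
    apply hat_horizontal.
  - intros u0 u1 u2 g s s'.
    rewrite <- !hat_curvature.
    apply hat_equivariant.
Qed.
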